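(* Let $I$ be a real interval with $[0,1]\subseteq I\subseteq\mathbb{R}_+$ and let $f\colon I^n\to\mathbb{R}$ be nonconstant. The following are equivalent: (i) $f$ is a quasi-Lovász extension and there exists $A\subseteq[n]$ with $f_0(\mathbf{1}_A)\neq0$; (ii) $f$ is comonotonically modular and $f_0$ is weakly homogeneous; (ii') $f$ is invariant under horizontal min-differences and $f_0$ is weakly homogeneous; (iii) there exists a nondecreasing function $\varphi_f\colon I\to\mathbb{R}$ with $\varphi_f(0)=0$ and $\varphi_f(1)=1$ such that $f=L_{f|_{\{0,1\}^n}}\circ\varphi_f$, i.e. $f(\mathbf{x})=L_{f|_{\{0,1\}^n}}(\varphi_f(x_1),\ldots,\varphi_f(x_n))$ for all $\mathbf{x}\in I^n$.
   Context: Notation: $[n]=\{1,\ldots,n\}$; $S_n$ the permutations of $[n]$; $\mathbf{1}_A$ is the indicator tuple of $A\subseteq[n]$, $\mathbf{0}=\mathbf{1}_\varnothing$; for a function $g$, $g_0=g-g(\mathbf{0})$. For $\sigma\in S_n$, $\mathbb{R}^n_\sigma=\{\mathbf{x}: x_{\sigma(1)}\leq\cdots\leq x_{\sigma(n)}\}$, $A^\uparrow_\sigma(i)=\{\sigma(i),\ldots,\sigma(n)\}$, $A^\uparrow_\sigma(n+1)=\varnothing$. The Lovász extension $L_\psi\colon\mathbb{R}^n\to\mathbb{R}$ of $\psi\colon\{0,1\}^n\to\mathbb{R}$ is the function whose restriction to each $\mathbb{R}^n_\sigma$ is the unique affine function agreeing with $\psi$ at the points $\mathbf{1}_{A^\uparrow_\sigma(k)}$,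 $k\in[n+1]$; a Lovász extension is any such $L_\psi$. A quasi-Lovász extension is $f(\mathbf{x})=L(\varphi(x_1),\ldots,\varphi(x_n))$ with $L$ a Lovász extension and $\varphi\colon I\to\mathbb{R}$ nondecreasing, $\varphi(0)=0$. Comonotonic: $\mathbf{x},\mathbf{x}'\in I^n\cap\mathbb{R}^n_\sigma$ for some $\sigma$. Comonotonically modular: $f(\mathbf{x})+f(\mathbf{x}')=f(\mathbf{x}\wedge\mathbf{x}')+f(\mathbf{x}\vee\mathbf{x}')$ for comonotonic $\mathbf{x},\mathbf{x}'$ ($\wedge,\vee$ componentwise). For $c\geq0$, $[\mathbf{x}]_c$ has $i$th component $0$ if $x_i\leq c$ and $x_i$ otherwise, and $\mathbf{x}\wedge c$ has components $\min(x_i,c)$; $f$ is invariant under horizontal min-differences if $f(\mathbf{x})-f(\mathbf{x}\wedge c)=f([\mathbf{x}]_c)-f([\mathbf{x}]_c\wedge c)$ for all $\mathbf{x}\in I^n$, $c\in I$. A function $g\colon I^n\to\mathbb{R}$ ($I\subseteq\mathbb{R}_+$) is weakly homogeneous if there is a nondecreasing $\phi\colon I\to\mathbb{R}$ with $\phi(0)=0$ and $g(x\mathbf{1}_A)=\phi(x)g(\mathbf{1}_A)$ for all $x\in I$, $A\subseteq[n]$. *)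

From mathcomp Require Import all_boot all_fingroup.
From Stdlib Require Import Reals.
Set Implicit Arguments. Unset Strict Implicit. Unset Printing Implicit Defensive.

Section Defs.
Variable n : nat.
Local Notation vec := ('I_n -> R).

Definition is_interval (I : R -> Prop) : Prop :=
  forall x y z, I x -> I z -> Rle x y -> Rle y z -> I y.

Definition inIn (I : R -> Prop) (x : vec) : Prop := forall i, I (x i).

Definition indic (A : {set 'I_n}) : vec := fun i => if i \in A then 1%R else 0%R.

Definition f0 (g : vec -> R) : vec -> R := fun x => (g x - g (indic set0))%R.

Definition in_cone (s : 'S_n) (x : vec) : Prop :=
  forall i j : 'I_n, (i <= j)%N -> Rle (x (s i)) (x (s j)).

(* A^up_s(k+1) = {s(k+1), ..., s(n)} for k = 0..n (0-based); k = n gives the empty set *)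
Definition Aup (s : 'S_n) (k : 'I_n.+1) : {set 'I_n} :=
  [set s j | j : 'I_n & (k <= j)%N].

Definition affine_fun (c : R) (a : vec) (x : vec) : R :=
  (c + \big[Rplus/0%R]_(i < n) (a i * x i))%R.

(* L is the Lovasz extension of psi : {0,1}^n -> R (identified with set functions
   via A |-> 1_A): on each cone R^n_s, L coincides with an affine function
   agreeing with psi at the points 1_{A^up_s(k)}, k in [n+1]. *)
Definition lovasz_ext_of (psi : {set 'I_n} -> R) (L : vec -> R) : Prop :=
  forall s : 'S_n, exists (c : R) (a : vec),
    (forall x, in_cone s x -> L x = affine_fun c a x) /\
    (forall k : 'I_n.+1, affine_fun c a (indic (Aup s k)) = psi (Aup s k)).

Definition is_lovasz_ext (L : vec -> R) : Prop :=
  exists psi, lovasz_ext_of psi L.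

Definition nondecr_on (I : R -> Prop) (phi : R -> R) : Prop :=
  forall x y, I x -> I y -> Rle x y -> Rle (phi x) (phi y).

Definition quasi_lovasz (I : R -> Prop) (f : vec -> R) : Prop :=
  exists (L : vec -> R) (phi : R -> R),
    is_lovasz_ext L /\ nondecr_on I phi /\ phi 0%R = 0%R /\
    forall x, inIn I x -> f x = L (fun i => phi (x i)).

Definition comonotonic (I : R -> Prop) (x y : vec) : Prop :=
  inIn I x /\ inIn I y /\ exists s : 'S_n, in_cone s x /\ in_cone s y.

Definition vmin (x y : vec) : vec := fun i => Rmin (x i) (y i).
Definition vmax (x y : vec) : vec := fun i => Rmax (x i) (y i).

Definition comonotonically_modular (I : R -> Prop) (f : vec -> R) : Prop :=
  forall x y, comonotonic I x y -> (f x + f y = f (vmin x y) + f (vmax x y))%R.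

Definition cut (x : vec) (c : R) : vec :=
  fun i => if Rle_dec (x i) c then 0%R else x i.
Definition minc (x : vec) (c : R) : vec := fun i => Rmin (x i) c.

Definition inv_horiz_min_diff (I : R -> Prop) (f : vec -> R) : Prop :=
  forall x c, inIn I x -> I c ->
    (f x - f (minc x c) = f (cut x c) - f (minc (cut x c) c))%R.

Definition weakly_homogeneous (I : R -> Prop) (g : vec -> R) : Prop :=
  exists phi : R -> R, nondecr_on I phi /\ phi 0%R = 0%R /\
    forall x (A : {set 'I_n}), I x ->
      g (fun i => x * indic A i)%R = (phi x * g (indic A))%R.

Definition nonconstant_on (I : R -> Prop) (f : vec -> R) : Prop :=
  exists x y, inIn I x /\ inIn I y /\ f x <> f y.

End Defs.

From HB Require Import structures.
From mathcomp Require Import all_boot all_fingroup.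
From Stdlib Require Import Reals Lra FunctionalExtensionality Classical ClassicalEpsilon.
Set Implicit Arguments. Unset Strict Implicit. Unset Printing Implicit Defensive.

(* A Lovász extension L_psi exists for every psi: on the cone of a sorting
   permutation s it is the affine map giving x_(s k) the weight
   psi(A_k) - psi(A_(k+1)), and summation by parts shows that all sorting
   permutations of x give the same value.  Being affine on cones, L_psi is
   comonotonically modular, hence so is L_psi o phi for nondecreasing phi, and
   comonotonic modularity implies invariance under horizontal min-differences.
   The key fact is that a function invariant under horizontal min-differences is
   determined by its values on the rays c 1_A.  Weak homogeneity of f_0 says that
   these values are f(0) + phi(c) f_0(1_A), which are also the ray values of
   L_{f|{0,1}^n} o phi; nonconstancy of f forces f_0(1_A) <> 0 for some A, which
   normalises phi(1) to 1. *)

HB.instance Definition _ := Monoid.isComLaw.Build R 0%R Rplus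
  (fun a b c => esym (Rplus_assoc a b c)) Rplus_comm Rplus_0_l.

Definition scaled_indic n (c : R) (A : {set 'I_n}) : 'I_n -> R :=
  fun i => (c * indic A i)%R.

Lemma scaled_indic1 n (A : {set 'I_n}) : scaled_indic 1 A = indic A.
Proof. by apply: functional_extensionality => i; rewrite /scaled_indic Rmult_1_l. Qed.

Definition upper_set n (s : 'S_n) (k : nat) : {set 'I_n} :=
  [set s j | j : 'I_n & k <= j].

Section Sorting.
Variable n : nat.
Implicit Types (x : 'I_n -> R) (s : 'S_n).

Lemma exists_sorting_perm x : exists s, in_cone s x.
Proof.
case: n x => [|m] x; first by exists 1%g => -[].
pose leT i j := is_left (Rle_dec (x i) (x j)).
have leT_total : total leT by move=> i j; rewrite /leT; do 2 case: Rle_dec => //=; lra.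
have leT_trans : transitive leT by move=> i j k; rewrite /leT; do 3 case: Rle_dec => //=; lra.
have leT_refl : reflexive leT by move=> i; rewrite /leT; case: Rle_dec => //=; lra.
pose l := sort leT (enum 'I_m.+1).
have l_sorted : sorted leT l := sort_sorted leT_total _.
have l_perm : perm_eq l (enum 'I_m.+1) := permEl (perm_sort _ _).
have l_size : size l = m.+1 by rewrite (perm_size l_perm) size_enum_ord.
have l_uniq : uniq l by rewrite (perm_uniq l_perm) enum_uniq.
have nth_inj : injective (fun i : 'I_m.+1 => nth ord0 l i).
  by move=> i j /eqP; rewrite nth_uniq ?l_size // => /eqP /val_inj.
exists (perm nth_inj) => i j ij; rewrite !permE.
have := sorted_leq_nth leT_trans leT_refl ord0 l_sorted i j.
by rewrite !inE l_size !ltn_ord /leT => /(_ isT isT ij); case: Rle_dec.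
Qed.

Lemma in_cone_indic_Aup s (A : {set 'I_n}) :
  in_cone s (indic A) -> exists k : 'I_n.+1, Aup s k = A.
Proof.
move=> A_cone.
pose P m := (m == n) || [exists j : 'I_n, (j == m :> nat) && (s j \in A)].
have [k Pk k_min] := ex_minnP (ex_intro P n (introT orP (or_introl (eqxx n)))).
have kn : k < n.+1 by rewrite ltnS; apply: k_min; rewrite /P eqxx.
exists (Ordinal kn); apply/setP => y; apply/imsetP/idP.
- case=> j; rewrite inE /= => kj ->.
  case/orP: Pk => [/eqP ek | /existsP [j0 /andP [/eqP ej0 j0A]]].
    by move: (leq_ltn_trans kj (ltn_ord j)); rewrite ek ltnn.
  have := A_cone j0 j; rewrite ej0 => /(_ kj); rewrite /indic j0A.
  by case: (s j \in A) => // h; lra.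
- move=> yA; exists ((s^-1)%g y); last by rewrite permKV.
  rewrite inE /=; apply: k_min; apply/orP; right.
  by apply/existsP; exists ((s^-1)%g y); rewrite eqxx permKV yA.
Qed.

Lemma card_ord_lt (i : nat) : #|[set m : 'I_n | m < i]| <= i.
Proof.
rewrite cardE -(size_map val) -[X in _ <= X](size_iota 0).
apply: uniq_leq_size; first by rewrite (map_inj_uniq val_inj) enum_uniq.
by move=> m /mapP [k]; rewrite mem_enum inE => ki ->; rewrite mem_iota.
Qed.

Lemma card_ord_le (i : 'I_n) : i.+1 <= #|[set k : 'I_n | k <= i]|.
Proof.
rewrite cardE -(size_map val) -[X in X <= _](size_iota 0).
apply: uniq_leq_size; first exact: iota_uniq.
move=> m; rewrite mem_iota add0n => /andP [_ mi].
have mn : m < n by apply: leq_trans mi (ltn_ord i).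
by apply/mapP; exists (Ordinal mn); rewrite ?mem_enum ?inE.
Qed.

(* If x (s' i) < x (s i), then s^-1 \o s' would inject {0..i} into {0..i-1}. *)
Lemma sorted_value_le x s s' (i : 'I_n) :
  in_cone s x -> in_cone s' x -> (x (s i) <= x (s' i))%R.
Proof.
move=> s_cone s'_cone; apply: Rnot_lt_le => lt_i.
pose h k := (s^-1)%g (s' k).
have h_inj : injective h by move=> a b /perm_inj /perm_inj.
have sub : h @: [set k : 'I_n | k <= i] \subset [set m : 'I_n | m < i].
  apply/subsetP => y /imsetP [k]; rewrite !inE => ki ->.
  rewrite ltnNge; apply/negP => /s_cone; rewrite /h permKV.
  by have := s'_cone _ _ ki; lra.
have := subset_leq_card sub; rewrite card_imset // => le_card.
by have := leq_trans (card_ord_le i) (leq_trans le_card (card_ord_lt i)); rewrite ltnn.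
Qed.

Lemma sorted_value_eq x s s' (i : 'I_n) :
  in_cone s x -> in_cone s' x -> x (s i) = x (s' i).
Proof. by move=> hs hs'; apply: Rle_antisym; apply: sorted_value_le. Qed.

Lemma upper_set_threshold x s (k : 'I_n) :
  in_cone s x -> (forall j : 'I_n, j < k -> (x (s j) < x (s k))%R) ->
  upper_set s k = [set j | is_left (Rle_dec (x (s k)) (x j))].
Proof.
move=> s_cone jump; apply/setP => y.
rewrite -(permKV s y) /upper_set mem_imset ?inE; last exact: perm_inj.
case: Rle_dec => /= [le_ky | lt_yk]; last by apply/negP => /s_cone.
by rewrite leqNgt; apply/negP => /jump; lra.
Qed.

End Sorting.

Lemma upper_set_ge n (s : 'S_n) k : n <= k -> upper_set s k = set0.
Proof.
move=> nk; apply/setP => y; rewrite inE; apply/imsetP => -[j]; rewrite inE => kj _.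
by move: (leq_ltn_trans nk (leq_ltn_trans kj (ltn_ord j))); rewrite ltnn.
Qed.

Lemma exists_min_on n (y : 'I_n -> R) (P : {pred 'I_n}) i0 : i0 \in P ->
  exists2 i, i \in P & forall j, j \in P -> (y i <= y j)%R.
Proof.
move=> P_i0; have [s y_cone] := exists_sorting_perm y.
have P_k0 : s ((s^-1)%g i0) \in P by rewrite permKV.
case: (@arg_minnP _ ((s^-1)%g i0) (fun k => s k \in P) val P_k0) => k P_k k_min.
exists (s k) => // j P_j; rewrite -(permKV s j); apply: y_cone; apply: k_min.
by rewrite permKV.
Qed.

Section Cones.
Variable n : nat.
Implicit Types (x y : 'I_n -> R) (s : 'S_n).

Lemma in_cone_vmin s x y : in_cone s x -> in_cone s y -> in_cone s (vmin x y).
Proof.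
move=> x_cone y_cone i j ij; rewrite /vmin.
exact: Rle_trans (Rle_min_compat_r _ _ _ (x_cone _ _ ij)) (Rle_min_compat_l _ _ _ (y_cone _ _ ij)).
Qed.

Lemma in_cone_vmax s x y : in_cone s x -> in_cone s y -> in_cone s (vmax x y).
Proof.
move=> x_cone y_cone i j ij; rewrite /vmax.
exact: Rle_trans (Rle_max_compat_r _ _ _ (x_cone _ _ ij)) (Rle_max_compat_l _ _ _ (y_cone _ _ ij)).
Qed.

Lemma in_cone_scale s x t : (0 <= t)%R -> in_cone s x -> in_cone s (fun i => t * x i)%R.
Proof. by move=> t_ge0 x_cone i j /x_cone; apply: Rmult_le_compat_l. Qed.

Lemma in_cone_minc s x c : in_cone s x -> in_cone s (minc x c).
Proof. by move=> x_cone i j /x_cone; apply: Rle_min_compat_r. Qed.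

Lemma in_cone_cut s x c : (0 <= c)%R -> in_cone s x -> in_cone s (cut x c).
Proof.
move=> c_ge0 x_cone i j /x_cone le_ij; rewrite /cut.
by do 2 case: Rle_dec => /= ?; lra.
Qed.

Lemma in_cone_comp (I : R -> Prop) phi s x :
  nondecr_on I phi -> inIn I x -> in_cone s x -> in_cone s (fun i => phi (x i)).
Proof. by move=> phi_nd xI x_cone i j /x_cone; apply: phi_nd. Qed.

Lemma affine_fun_scale c a y t :
  affine_fun c a (fun i => t * y i)%R = (c + t * (affine_fun c a y - c))%R.
Proof.
rewrite /affine_fun.
have -> : \big[Rplus/0%R]_(i < n) (a i * (t * y i))%R =
          (t * \big[Rplus/0%R]_(i < n) (a i * y i))%R.
  by apply: (big_rec2 (fun u v => u = t * v)%R) => [|i u v _ ->]; ring.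
ring.
Qed.

Lemma affine_fun_modular c a x y :
  (affine_fun c a x + affine_fun c a y =
   affine_fun c a (vmin x y) + affine_fun c a (vmax x y))%R.
Proof.
rewrite /affine_fun.
suff : (\big[Rplus/0%R]_(i < n) (a i * x i) + \big[Rplus/0%R]_(i < n) (a i * y i) =
  \big[Rplus/0%R]_(i < n) (a i * vmin x y i) + \big[Rplus/0%R]_(i < n) (a i * vmax x y i))%R
  by lra.
rewrite -!big_split; apply: eq_bigr => i _ /=.
by rewrite /vmin /vmax /Rmin /Rmax; case: Rle_dec => _; ring.
Qed.

Lemma nondecr_Rmin (I : R -> Prop) phi a b : nondecr_on I phi -> I a -> I b ->
  phi (Rmin a b) = Rmin (phi a) (phi b).
Proof.
move=> phi_nd aI bI; rewrite /Rmin.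
case: (Rle_dec a b) => [ab | /Rnot_le_lt/Rlt_le ba].
  by have := phi_nd _ _ aI bI ab; case: Rle_dec => //; lra.
by have := phi_nd _ _ bI aI ba; case: Rle_dec => //; lra.
Qed.

Lemma nondecr_Rmax (I : R -> Prop) phi a b : nondecr_on I phi -> I a -> I b ->
  phi (Rmax a b) = Rmax (phi a) (phi b).
Proof.
move=> phi_nd aI bI; rewrite /Rmax.
case: (Rle_dec a b) => [ab | /Rnot_le_lt/Rlt_le ba].
  by have := phi_nd _ _ aI bI ab; case: Rle_dec => //; lra.
by have := phi_nd _ _ bI aI ba; case: Rle_dec => //; lra.
Qed.

End Cones.

Section LovaszExtension.
Variables (n : nat) (psi : {set 'I_n} -> R) (L : ('I_n -> R) -> R).
Hypothesis L_psi : lovasz_ext_of psi L.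

Lemma lovasz_ext_indic A : L (indic A) = psi A.
Proof.
have [s A_cone] := exists_sorting_perm (indic A).
have [c [a [L_affine affine_psi]]] := L_psi s.
rewrite L_affine //; have [k <-] := in_cone_indic_Aup A_cone.
exact: affine_psi.
Qed.

Lemma lovasz_ext_ray A t : (0 <= t)%R ->
  L (scaled_indic t A) = (L (indic set0) + t * (L (indic A) - L (indic set0)))%R.
Proof.
move=> t_ge0; have [s A_cone] := exists_sorting_perm (indic A).
have [c [a [L_affine _]]] := L_psi s.
have -> : indic set0 = scaled_indic 0 A.
  by apply: functional_extensionality => i; rewrite /scaled_indic /indic in_set0 Rmult_0_l.
have t_cone := in_cone_scale t_ge0 A_cone.
have zero_cone := in_cone_scale (Rle_refl 0) A_cone.
rewrite !L_affine // /scaled_indic !affine_fun_scale; ring.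
Qed.

Lemma lovasz_ext_modular s x y : in_cone s x -> in_cone s y ->
  (L x + L y = L (vmin x y) + L (vmax x y))%R.
Proof.
move=> x_cone y_cone; have [c [a [L_affine _]]] := L_psi s.
have min_cone := in_cone_vmin x_cone y_cone.
have max_cone := in_cone_vmax x_cone y_cone.
by rewrite !L_affine // affine_fun_modular.
Qed.

Variables (I : R -> Prop) (phi : R -> R).
Hypothesis phi_nd : nondecr_on I phi.

Lemma lovasz_comp_comonotonically_modular f :
  (forall x, inIn I x -> f x = L (fun i => phi (x i))) -> comonotonically_modular I f.
Proof.
move=> f_comp x y [xI [yI [s [x_cone y_cone]]]].
have minI : inIn I (vmin x y) by move=> i; apply: Rmin_case.
have maxI : inIn I (vmax x y) by move=> i; apply: Rmax_case.
rewrite !f_comp //.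
have -> : (fun i => phi (vmin x y i)) = vmin (fun i => phi (x i)) (fun i => phi (y i)).
  by apply: functional_extensionality => i; exact: nondecr_Rmin phi_nd (xI i) (yI i).
have -> : (fun i => phi (vmax x y i)) = vmax (fun i => phi (x i)) (fun i => phi (y i)).
  by apply: functional_extensionality => i; exact: nondecr_Rmax phi_nd (xI i) (yI i).
by apply: (@lovasz_ext_modular s); apply: (in_cone_comp phi_nd).
Qed.

Hypotheses (I0 : I 0%R) (I_nonneg : forall x, I x -> (0 <= x)%R) (phi0 : phi 0%R = 0%R).

Lemma lovasz_comp_ray c B : I c ->
  L (fun i => phi (scaled_indic c B i)) =
  (L (indic set0) + phi c * (L (indic B) - L (indic set0)))%R.
Proof.
move=> cI; rewrite -lovasz_ext_ray; last by rewrite -phi0; apply: phi_nd => //; apply: I_nonneg.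
congr L; apply: functional_extensionality => i.
by rewrite /scaled_indic /indic; case: (i \in B); rewrite ?Rmult_1_r ?Rmult_0_r.
Qed.

End LovaszExtension.

Lemma sum_telescope_from (g : nat -> R) N k : k <= N ->
  \big[Rplus/0%R]_(i < N) (if k <= i then (g i - g i.+1)%R else 0%R) = (g k - g N)%R.
Proof.
elim: N => [|N IH] kN; first by rewrite big_ord0; move: kN; rewrite leqn0 => /eqP ->; ring.
rewrite big_ord_recr /=; case: (leqP k N) => kN'; first by rewrite IH //; ring.
have -> : k = N.+1 by apply/eqP; rewrite eqn_leq kN kN'.
by rewrite big1 => [|i _]; [ring | rewrite leqNgt (leq_trans (ltn_ord i)) ?leqnSn].
Qed.

Lemma sum_by_parts (G V U : nat -> R) N :
  U 0 = 0%R -> (forall j, U j.+1 = V j) ->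
  \big[Rplus/0%R]_(i < N) ((G i - G i.+1) * V i)%R =
  (\big[Rplus/0%R]_(i < N) (G i * (V i - U i)) - G N * U N)%R.
Proof.
move=> U0 US; elim: N => [|N IH]; first by rewrite !big_ord0 U0; ring.
rewrite !big_ord_recr /= IH US; set S := \big[_/_]_(i < N) _; ring.
Qed.

Section LovaszExtensionConstruction.
Variables (n : nat) (psi : {set 'I_n.+1} -> R).
Local Notation N := n.+1.
Implicit Types (s : 'S_N) (x : 'I_N -> R).

Definition psi_upper s (k : nat) : R := psi (upper_set s k).

Definition lovasz_coef s : 'I_N -> R :=
  fun j => (psi_upper s ((s^-1)%g j) - psi_upper s ((s^-1)%g j).+1)%R.

Lemma lovasz_coef_upper_set s k : k <= N ->
  affine_fun (psi set0) (lovasz_coef s) (indic (upper_set s k)) = psi (upper_set s k).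
Proof.
move=> kN; rewrite /affine_fun (reindex_inj (@perm_inj _ s)) /=.
rewrite (eq_bigr (fun i : 'I_N => if k <= i then (psi_upper s i - psi_upper s i.+1)%R else 0%R)).
  by rewrite sum_telescope_from // /psi_upper (upper_set_ge s (leqnn N)); ring.
move=> i _; rewrite /lovasz_coef permK /indic /upper_set mem_imset ?inE; last exact: perm_inj.
by case: (k <= i); ring.
Qed.

Definition sorted_coord s x (k : nat) : R := x (s (inord k)).
Definition shift (V : nat -> R) (k : nat) : R := if k is j.+1 then V j else 0%R.

Lemma lovasz_coef_by_parts s x :
  affine_fun (psi set0) (lovasz_coef s) x =
  (psi set0 + \big[Rplus/0%R]_(i < N)
     (psi_upper s i * (sorted_coord s x i - shift (sorted_coord s x) i))
   - psi_upper s N * sorted_coord s x n)%R.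
Proof.
rewrite /affine_fun (reindex_inj (@perm_inj _ s)) /=.
rewrite (eq_bigr (fun i : 'I_N => ((psi_upper s i - psi_upper s i.+1) * sorted_coord s x i)%R)).
  rewrite (@sum_by_parts _ _ (shift (sorted_coord s x))) // /shift.
  by set S := \big[_/_]_(i < N) _; ring.
by move=> i _; rewrite /lovasz_coef /sorted_coord permK inord_val.
Qed.

Lemma sorted_coord_jump s x (i : 'I_N) : in_cone s x ->
  sorted_coord s x i <> shift (sorted_coord s x) i ->
  forall j : 'I_N, j < i -> (x (s j) < x (s i))%R.
Proof.
move=> x_cone; rewrite /sorted_coord /shift inord_val.
case: (nat_of_ord i) (ltn_ord i) (@inord_val n i) => [|k] ki ikE //.
rewrite -[in x (s i)]ikE => neq j jk.
have le_k : (x (s (inord k)) <= x (s (inord k.+1)))%R by apply: x_cone; rewrite !inordK // ltnW.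
have le_j : (x (s j) <= x (s (inord k)))%R by apply: x_cone; rewrite inordK // ltnW.
lra.
Qed.

Lemma psi_upper_at_jump s s' x (i : 'I_N) : in_cone s x -> in_cone s' x ->
  sorted_coord s x i <> shift (sorted_coord s x) i -> psi_upper s i = psi_upper s' i.
Proof.
move=> s_cone s'_cone jump.
have coordE : sorted_coord s x = sorted_coord s' x.
  by apply: functional_extensionality => k; apply: sorted_value_eq.
have jump_s := sorted_coord_jump s_cone jump.
have jump' : sorted_coord s' x i <> shift (sorted_coord s' x) i by rewrite -coordE.
have jump_s' := sorted_coord_jump s'_cone jump'.
rewrite /psi_upper (upper_set_threshold s_cone jump_s) (upper_set_threshold s'_cone jump_s').
by rewrite (sorted_value_eq i s_cone s'_cone).
Qed.

(* By parts, the value is psi(set0) + sum_k psi(A_k) (x_(s k) - x_(s (k-1)));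
   a nonzero increment forces A_k = {j | x_(s k) <= x_j}, independently of s. *)
Lemma lovasz_coef_consistent s s' x : in_cone s x -> in_cone s' x ->
  affine_fun (psi set0) (lovasz_coef s) x = affine_fun (psi set0) (lovasz_coef s') x.
Proof.
move=> s_cone s'_cone; rewrite !lovasz_coef_by_parts.
have coordE : sorted_coord s' x = sorted_coord s x.
  by apply: functional_extensionality => k; apply: sorted_value_eq.
have topE : psi_upper s' N = psi_upper s N by rewrite /psi_upper !(upper_set_ge _ (leqnn N)).
rewrite coordE topE; congr (_ + _ - _)%R; apply: eq_bigr => i _.
case: (Req_EM_T (sorted_coord s x i) (shift (sorted_coord s x) i)) => [-> | jump].
  by rewrite Rminus_diag !Rmult_0_r.
by rewrite (psi_upper_at_jump s_cone s'_cone jump).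
Qed.

Definition sorting_perm x : 'S_N :=
  proj1_sig (constructive_indefinite_description _ (exists_sorting_perm x)).

Lemma sorting_permP x : in_cone (sorting_perm x) x.
Proof. exact: proj2_sig (constructive_indefinite_description _ (exists_sorting_perm x)). Qed.

Definition lovasz x : R := affine_fun (psi set0) (lovasz_coef (sorting_perm x)) x.

Lemma lovasz_ext_of_lovasz : lovasz_ext_of psi lovasz.
Proof.
move=> s; exists (psi set0), (lovasz_coef s); split.
  by move=> x x_cone; apply: lovasz_coef_consistent (sorting_permP x) x_cone.
by move=> k; apply: lovasz_coef_upper_set; rewrite -ltnS ltn_ord.
Qed.

End LovaszExtensionConstruction.

Lemma lovasz_ext_exists n (psi : {set 'I_n} -> R) : exists L, lovasz_ext_of psi L.
Proof.
case: n psi => [|n] psi; last by exists (lovasz psi); apply: lovasz_ext_of_lovasz.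
exists (fun _ => psi set0) => s; exists (psi set0), (fun _ => 0%R).
split=> [x _ | k]; rewrite /affine_fun big_ord0 Rplus_0_r //.
by congr psi; apply/setP => -[].
Qed.

Definition pos_support n (y : 'I_n -> R) : {set 'I_n} :=
  [set i | is_left (Rlt_dec 0 (y i))].

Lemma minc_pos_support n (y : 'I_n -> R) c :
  (forall i, 0 <= y i)%R -> (0 <= c)%R -> (forall i, 0 < y i -> c <= y i)%R ->
  minc y c = scaled_indic c (pos_support y).
Proof.
move=> y_ge0 c_ge0 c_le; apply: functional_extensionality => i.
rewrite /minc /scaled_indic /indic inE; case: Rlt_dec => /= [/c_le c_le_i | y_le0].
  by rewrite Rmin_right // Rmult_1_r.
have -> : y i = 0%R by have := y_ge0 i; lra.
by rewrite Rmin_left // Rmult_0_r.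
Qed.

Lemma pos_support_cut_proper n (y : 'I_n -> R) c i : (0 < y i <= c)%R ->
  pos_support (cut y c) \proper pos_support y.
Proof.
move=> yi_in; apply/properP; split.
  apply/subsetP => j; rewrite !inE /cut.
  by case: Rle_dec => /= _ //; case: Rlt_dec => //= ?; lra.
exists i; rewrite !inE /cut; first by case: Rlt_dec => //=; lra.
by case: Rle_dec => /= [_ | ?]; [case: Rlt_dec => //= ?; lra | lra].
Qed.

Section HorizontalMinDifferences.
Variables (n : nat) (I : R -> Prop).
Hypotheses (I0 : I 0%R) (I_nonneg : forall x, I x -> (0 <= x)%R).
Implicit Types (x y : 'I_n -> R) (A : {set 'I_n}) (f g : ('I_n -> R) -> R).

Lemma inIn_cut x c : inIn I x -> inIn I (cut x c).
Proof. by move=> xI i; rewrite /cut; case: Rle_dec => ?; [exact: I0 | exact: xI]. Qed.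

Lemma inIn_scaled_indic c A : I c -> inIn I (scaled_indic c A).
Proof.
by move=> cI i; rewrite /scaled_indic /indic; case: (i \in A); rewrite ?Rmult_1_r ?Rmult_0_r.
Qed.

(* [x] is the join and [minc (cut x c) c] the meet of the comonotonic pair
   [minc x c], [cut x c]. *)
Lemma comonotonically_modular_inv_horiz_min_diff f :
  comonotonically_modular I f -> inv_horiz_min_diff I f.
Proof.
move=> f_cm x c xI cI.
have c_ge0 := I_nonneg cI.
have x_ge0 i := I_nonneg (xI i).
have [s x_cone] := exists_sorting_perm x.
have meet_eq : vmin (minc x c) (cut x c) = minc (cut x c) c.
  apply: functional_extensionality => i; have xi_ge0 := x_ge0 i.
  rewrite /vmin /minc /cut /Rmin; case: (Rle_dec (x i) c) => /= ?;
  by do ?[case: (Rle_dec _ _) => /= ?]; lra.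
have join_eq : vmax (minc x c) (cut x c) = x.
  apply: functional_extensionality => i; have xi_ge0 := x_ge0 i.
  rewrite /vmax /minc /cut /Rmin /Rmax; case: (Rle_dec (x i) c) => /= ?;
  by do ?[case: (Rle_dec _ _) => /= ?]; lra.
have comon : comonotonic I (minc x c) (cut x c).
  split; first by move=> i; apply: Rmin_case.
  split; first exact: inIn_cut.
  by exists s; split; [apply: in_cone_minc | apply: in_cone_cut].
by have := f_cm _ _ comon; rewrite meet_eq join_eq; lra.
Qed.

(* Induction on the support: with c the least positive coordinate of y, both
   [minc y c] and [minc (cut y c) c] are rays, and [cut y c] has smaller support. *)
Lemma inv_horiz_min_diff_determined_by_rays f g :
  inv_horiz_min_diff I f -> inv_horiz_min_diff I g ->
  (forall c A, I c -> f (scaled_indic c A) = g (scaled_indic c A)) ->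
  forall y, inIn I y -> f y = g y.
Proof.
move=> f_inv g_inv fg_rays y; have [m] := ubnP #|pos_support y|.
elim: m y => // m IH y supp_lt yI.
have y_ge0 i := I_nonneg (yI i).
case: (set_0Vmem (pos_support y)) => [supp0 | [i0 i0_supp]].
  have -> : y = scaled_indic 0 set0; last exact: fg_rays.
  apply: functional_extensionality => i; move/setP/(_ i): supp0.
  rewrite /scaled_indic /pos_support Rmult_0_l !inE; case: Rlt_dec => //= ? _.
  by have := y_ge0 i; lra.
have [i1 i1_supp i1_min] := exists_min_on y i0_supp.
set c := y i1.
have c_gt0 : (0 < c)%R by move: i1_supp; rewrite /pos_support inE; case: Rlt_dec.
have cut_ge0 i : (0 <= cut y c i)%R by rewrite /cut; case: Rle_dec => /= _; [lra | apply: y_ge0].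
have minc_y : minc y c = scaled_indic c (pos_support y).
  apply: minc_pos_support => // [|i yi_gt0]; first lra.
  by apply: i1_min; rewrite /pos_support inE; case: Rlt_dec.
have minc_cut : minc (cut y c) c = scaled_indic c (pos_support (cut y c)).
  apply: minc_pos_support => // [|i]; first lra.
  by rewrite /cut; case: Rle_dec => /= ? ?; lra.
have f_cut : f (cut y c) = g (cut y c).
  apply: IH; last exact: inIn_cut.
  rewrite -ltnS; apply: (leq_trans _ supp_lt); rewrite ltnS; apply: proper_card.
  by apply: (@pos_support_cut_proper _ _ _ i1); split; [|apply: Rle_refl].
have cI : I c := yI i1.
have := f_inv y c yI cI; have := g_inv y c yI cI.
rewrite minc_y minc_cut !fg_rays // f_cut; lra.
Qed.

End HorizontalMinDifferences.


Section Characterization.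
Local Open Scope R_scope.
Variables (n : nat) (I : R -> Prop) (f : ('I_n -> R) -> R).
Hypotheses (I0 : I 0) (I1 : I 1) (I_nonneg : forall x, I x -> (0 <= x)).
Hypothesis f_nonconst : nonconstant_on I f.

Lemma nonconstant_f0_indic_neq0 phi : inv_horiz_min_diff I f ->
  (forall c B, I c -> f (scaled_indic c B) = (f (indic set0) + phi c * f0 f (indic B))) ->
  exists A, f0 f (indic A) <> 0.
Proof.
move=> f_inv f_rays; apply: NNPP => f0_eq0.
have const_inv : inv_horiz_min_diff I (fun _ : 'I_n -> R => f (indic set0)) by [].
have rays_const c B : I c -> f (scaled_indic c B) = f (indic set0).
  move=> cI; rewrite f_rays //.
  have -> : f0 f (indic B) = 0 by apply: NNPP => ?; apply: f0_eq0; exists B.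
  ring.
have f_const := inv_horiz_min_diff_determined_by_rays I0 I_nonneg f_inv const_inv rays_const.
have [x [y [xI [yI]]]] := f_nonconst.
by rewrite !f_const.
Qed.

Lemma quasi_lovasz_modular_weakly_homogeneous :
  quasi_lovasz I f -> (exists A, f0 f (indic A) <> 0) ->
  comonotonically_modular I f /\ weakly_homogeneous I (f0 f).
Proof.
move=> [L [phi [[psi L_psi] [phi_nd [phi0 f_comp]]]]] [A fA_neq0].
have f_ray c B : I c ->
    f (scaled_indic c B) = (L (indic set0) + phi c * (L (indic B) - L (indic set0))).
  move=> cI; rewrite f_comp; last exact: inIn_scaled_indic.
  exact: (lovasz_comp_ray L_psi phi_nd I0 I_nonneg phi0 B cI).
have f_empty : f (indic set0) = L (indic set0).
  by rewrite -{1}(scaled_indic1 set0) f_ray //; ring.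
have f0_indic B : f0 f (indic B) = (phi 1 * (L (indic B) - L (indic set0))).
  by rewrite /f0 -{1}(scaled_indic1 B) f_ray // f_empty; ring.
have phi1_gt0 : (0 < phi 1).
  have : (phi 0 <= phi 1) by apply: phi_nd => //; lra.
  have : phi 1 <> 0 by move=> phi1; apply: fA_neq0; rewrite f0_indic phi1; ring.
  lra.
split; first exact: (lovasz_comp_comonotonically_modular L_psi phi_nd f_comp).
exists (fun c => phi c / phi 1); split; [|split].
- move=> a b aI bI ab; apply: Rmult_le_compat_r; last exact: phi_nd.
  exact/Rlt_le/Rinv_0_lt_compat.
- by rewrite phi0 /Rdiv Rmult_0_l.
- move=> c B cI; rewrite f0_indic /f0 f_ray // f_empty; field; lra.
Qed.

Lemma inv_horiz_weakly_homogeneous_lovasz_repr :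
  inv_horiz_min_diff I f -> weakly_homogeneous I (f0 f) ->
  exists phi : R -> R,
    nondecr_on I phi /\ phi 0 = 0 /\ phi 1 = 1 /\
    exists L, lovasz_ext_of (fun A => f (indic A)) L /\
      forall x, inIn I x -> f x = L (fun i => phi (x i)).
Proof.
move=> f_inv [phi [phi_nd [phi0 f0_hom]]].
have f_rays c B : I c -> f (scaled_indic c B) = (f (indic set0) + phi c * f0 f (indic B)).
  by move=> cI; have := f0_hom c B cI; rewrite /f0 /scaled_indic; lra.
have [A fA_neq0] := nonconstant_f0_indic_neq0 f_inv f_rays.
have phi1 : phi 1 = 1.
  apply: (Rmult_eq_reg_r (f0 f (indic A))) => //.
  rewrite Rmult_1_l -f0_hom //.
  by have := scaled_indic1 A; rewrite /scaled_indic => ->.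
have [L L_psi] := lovasz_ext_exists (fun A => f (indic A)).
exists phi; do 3!split=> //; exists L; split=> //.
apply: (inv_horiz_min_diff_determined_by_rays I0 I_nonneg f_inv).
  apply: (comonotonically_modular_inv_horiz_min_diff I0 I_nonneg).
  exact: (lovasz_comp_comonotonically_modular L_psi phi_nd (f := fun x => L (fun i => phi (x i)))).
move=> c B cI; rewrite f_rays // (lovasz_comp_ray L_psi phi_nd I0 I_nonneg phi0 B cI).
by rewrite !(lovasz_ext_indic L_psi).
Qed.

Lemma lovasz_repr_quasi_lovasz phi L :
  nondecr_on I phi -> phi 0 = 0 -> lovasz_ext_of (fun A => f (indic A)) L ->
  (forall x, inIn I x -> f x = L (fun i => phi (x i))) ->
  quasi_lovasz I f /\ exists A, f0 f (indic A) <> 0.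
Proof.
move=> phi_nd phi0 L_psi f_comp; split.
  by exists L, phi; split; first by exists (fun A => f (indic A)).
apply: (@nonconstant_f0_indic_neq0 phi).
  apply: (comonotonically_modular_inv_horiz_min_diff I0 I_nonneg).
  exact: (lovasz_comp_comonotonically_modular L_psi phi_nd f_comp).
move=> c B cI; rewrite f_comp; last exact: inIn_scaled_indic.
by rewrite (lovasz_comp_ray L_psi phi_nd I0 I_nonneg phi0 B cI) !(lovasz_ext_indic L_psi).
Qed.

End Characterization.

Theorem theorem14 (n : nat) (I : R -> Prop) (f : ('I_n -> R) -> R) :
  is_interval I ->
  (forall x, Rle 0 x -> Rle x 1 -> I x) ->
  (forall x, I x -> Rle 0 x) ->
  nonconstant_on I f ->
  let cond_i := quasi_lovasz I f /\ exists A : {set 'I_n}, f0 f (indic A) <> 0%R in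
  let cond_ii := comonotonically_modular I f /\ weakly_homogeneous I (f0 f) in
  let cond_ii' := inv_horiz_min_diff I f /\ weakly_homogeneous I (f0 f) in
  let cond_iii := exists phi : R -> R,
      nondecr_on I phi /\ phi 0%R = 0%R /\ phi 1%R = 1%R /\
      exists L, lovasz_ext_of (fun A => f (indic A)) L /\
        forall x, inIn I x -> f x = L (fun i => phi (x i)) in
  (cond_i <-> cond_ii) /\ (cond_i <-> cond_ii') /\ (cond_i <-> cond_iii).
Proof.
move=> _ I_01 I_nonneg f_nonconst cond_i cond_ii cond_ii' cond_iii.
have I0 : I 0%R by apply: I_01; lra.
have I1 : I 1%R by apply: I_01; lra.
have i_ii : cond_i -> cond_ii.
  by case; apply: quasi_lovasz_modular_weakly_homogeneous.
have ii_ii' : cond_ii -> cond_ii'.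
  by case=> f_cm f_hom; split=> //; apply: comonotonically_modular_inv_horiz_min_diff.
have ii'_iii : cond_ii' -> cond_iii.
  by case; apply: inv_horiz_weakly_homogeneous_lovasz_repr.
have iii_i : cond_iii -> cond_i.
  by move=> [phi [phi_nd [phi0 [_ [L [L_psi f_comp]]]]]]; apply: lovasz_repr_quasi_lovasz L_psi f_comp.
tauto.
Qed.
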